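(* For every $p>1$, $$\mathrm{ZZ}\ \ge\ C_p^{(1)}:=\frac12\int_0^\infty V\Big\{\int_{-\infty}^{\infty}{\rm E}\Big[\big(f_{\phi|\mathbf{x}}(\varphi|\mathbf{x})^{\frac{1}{1-p}}+f_{\phi|\mathbf{x}}(\varphi+h|\mathbf{x})^{\frac{1}{1-p}}\big)^{1-p}\Big]d\varphi\Big\}(h)\,h\,dh$$ and $$\mathrm{ZZ}\ \ge\ C_p^{(2)}:=\frac12\int_0^\infty V\Big\{\int_{-\infty}^{\infty}{\rm E}\Big[f_{\phi|\mathbf{x}}(\varphi|\mathbf{x})+f_{\phi|\mathbf{x}}(\varphi+h|\mathbf{x})-\big(f_{\phi|\mathbf{x}}(\varphi|\mathbf{x})^{\frac{p}{p-1}}+f_{\phi|\mathbf{x}}(\varphi+h|\mathbf{x})^{\frac{p}{p-1}}\big)^{\frac{p-1}{p}}\Big]d\varphi\Big\}(h)\,h\,dh,$$ where the expectations are over the marginal law of $\mathbf{x}$. Consequently, combined with the extended Ziv–Zakai bound ${\rm E}[|\hat\phi(\mathbf{x})-\phi|^2]\ge \mathrm{ZZ}$, every estimator $\hat\phi$ satisfies ${\rm E}[|\hat\phi(\mathbf{x})-\phi|^2]\ge\max(C_p^{(1)},C_p^{(2)})$ for all $p>1$.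
   Context: A continuous scalar random parameter $\phi$ has prior density $f_\phi$, and the observation $\mathbf{x}$ (continuous, with conditional density $f_{\mathbf{x}|\phi}(\mathbf{x}|\varphi)$) has posterior density $f_{\phi|\mathbf{x}}(\cdot|\mathbf{x})$; assume the posterior density is positive. For $\varphi\in\mathbb{R}$, $h>0$, $P_{\min}(\varphi,\varphi+h)$ is the minimum (MAP) probability of error of the binary test $H_0:\mathbf{x}\sim f_{\mathbf{x}|\phi}(\cdot|\varphi)$ versus $H_1:\mathbf{x}\sim f_{\mathbf{x}|\phi}(\cdot|\varphi+h)$ with priors $P(H_0)=\frac{f_\phi(\varphi)}{f_\phi(\varphi)+f_\phi(\varphi+h)}$, $P(H_1)=1-P(H_0)$. The valley-filling operator is $(Vg)(h)=\sup_{\xi\ge0}g(h+\xi)$. The (extended Ziv–Zakai) quantity is $\mathrm{ZZ}=\frac12\int_0^\infty V\big\{\int_{-\infty}^\infty (f_\phi(\varphi)+f_\phi(\varphi+h))P_{\min}(\varphi,\varphi+h)\,d\varphi\big\}(h)\,h\,dh$. *)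

From HB Require Import structures.
From mathcomp Require Import all_boot all_order all_algebra.
From mathcomp Require Import all_classical all_reals all_analysis.
Set Implicit Arguments. Unset Strict Implicit. Unset Printing Implicit Defensive.
Import Order.TTheory GRing.Theory Num.Theory.
Import numFieldNormedType.Exports.
Local Open Scope classical_set_scope.
Local Open Scope ring_scope.

Section ZZDefs.
Context {R : realType} {d : measure_display} {T : measurableType d}.
Variable mu : {measure set T -> \bar R}.  (* reference measure for x *)
Variable fphi : R -> R.
Variable fx : T -> R -> R.                 (* fx x v = f_{x|phi}(x|v) *)

Local Notation leb := (@lebesgue_measure R).

Definition marg (x : T) : R :=
  fine (\int[leb]_v (fphi v * fx x v)%:E)%E.

Definition post (x : T) (v : R) : R := fphi v * fx x v / marg x.

Definition Emarg (q : T -> R) : \bar R := (\int[mu]_x (marg x * q x)%:E)%E.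

(* minimum probability of error of the binary test
   H0 : x ~ fx(.|v) vs H1 : x ~ fx(.|v+h), with priors
   P(H0) = fphi v/(fphi v + fphi(v+h)), P(H1) = 1 - P(H0);
   infimum over all (measurable) decision regions A = {decide H1}. *)
Definition Pmin (v h : R) : \bar R :=
  let pi0 := fphi v / (fphi v + fphi (v + h)) in
  let pi1 := 1 - pi0 in
  ereal_inf [set (pi0%:E * \int[mu]_(x in A) (fx x v)%:E
                 + pi1%:E * \int[mu]_(x in ~` A) (fx x (v + h))%:E)%E
            | A in [set A : set T | measurable A]].

Definition valley (g : R -> \bar R) (h : R) : \bar R :=
  ereal_sup [set g (h + xi) | xi in [set xi : R | 0 <= xi]].

Definition ZZform (g : R -> \bar R) : \bar R :=
  (((2^-1 : R)%:E) * \int[leb]_(h in [set h : R | (0 <= h)%R]) (valley g h * (h%:E)%R))%E.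

Definition ZZ : \bar R :=
  ZZform (fun h => \int[leb]_v ((fphi v + fphi (v + h))%:E * Pmin v h))%E.

Definition Cp1 (p : R) : \bar R :=
  ZZform (fun h => \int[leb]_v
    Emarg (fun x => powR (powR (post x v) (1 / (1 - p))
                          + powR (post x (v + h)) (1 / (1 - p))) (1 - p))%R)%E.

Definition Cp2 (p : R) : \bar R :=
  ZZform (fun h => \int[leb]_v
    Emarg (fun x => post x v + post x (v + h)
             - powR (powR (post x v) (p / (p - 1))
                     + powR (post x (v + h)) (p / (p - 1))) ((p - 1) / p))%R)%E.

Definition MSE (est : T -> R) : \bar R :=
  (\int[leb]_v \int[mu]_x (fphi v * fx x v * (est x - v) ^+ 2)%:E)%E.

End ZZDefs.

From HB Require Import structures.
From mathcomp Require Import all_boot all_order all_algebra.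
From mathcomp Require Import all_classical all_reals all_analysis.
From mathcomp Require Import measurable_realfun.
Set Implicit Arguments. Unset Strict Implicit. Unset Printing Implicit Defensive.
Import Order.TTheory GRing.Theory Num.Theory.
Import numFieldNormedType.Exports.
Local Open Scope classical_set_scope.
Local Open Scope ring_scope.

(* Scaled by f_phi(v) + f_phi(v+h), the Bayes risk of a decision region A for the
   test f(.|v) against f(.|v+h) is E[post(v|x) 1_A(x) + post(v+h|x) 1_{~A}(x)],
   the expectation being under the marginal law of x.  Hence every function of x
   bounded by both posteriors has expectation at most
   (f_phi(v) + f_phi(v+h)) Pmin(v, v+h).  The integrands of C_p^(1) and C_p^(2)
   are such functions, being below the minimum of their two arguments, and
   integration in v, valley filling and integration against h dh are monotone. *)

(* No measurability is needed: the integral of f is at most that of its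
   nonnegative part. *)
Lemma le_integral_nnegr (d : measure_display) (T : measurableType d)
    (R : realType) (mu : {measure set T -> \bar R}) (D : set T)
    (f g : T -> \bar R) :
  (forall x, D x -> (0 <= g x)%E) -> (forall x, D x -> (f x <= g x)%E) ->
  (\int[mu]_(x in D) f x <= \int[mu]_(x in D) g x)%E.
Proof.
move=> g0 fg; rewrite [X in (X <= _)%E]integralE.
apply: (@le_trans _ _ (\int[mu]_(x in D) f^\+ x)%E).
  rewrite -[X in (_ <= X)%E]sube0 leeB //.
  by apply: integral_ge0 => x _; exact: funeneg_ge0.
rewrite !ge0_integralE; last 2 first.
- exact: g0.
- by move=> x _; exact: funepos_ge0.
apply: ereal_sup_le => _ [s sf <-]; exists s => //= x.
apply: (le_trans (sf x)); rewrite /patch; case: ifP => // /[1!inE] Dx.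
by rewrite funeposE ge_max fg //= g0.
Qed.

Lemma powR_sum_invexp_le (R : realType) (a b p : R) : 0 < a -> 0 <= b -> 1 < p ->
  powR (powR a (1 / (1 - p)) + powR b (1 / (1 - p))) (1 - p) <= a.
Proof.
move=> a_gt0 b_ge0 p_gt1; set r := 1 / (1 - p).
have p1_neq0 : 1 - p != 0 by rewrite subr_eq0 eq_sym gt_eqF.
have ar_gt0 : 0 < powR a r by exact: powR_gt0.
have le_ar_sum : powR a r <= powR a r + powR b r by rewrite lerDl powR_ge0.
have -> : 1 - p = - (p - 1) by rewrite opprB.
have {2}-> : a = (powR (powR a r) (p - 1))^-1.
  by rewrite -powRN opprB -powRrM /r mul1r mulVf // powRr1 // ltW.
rewrite powRN lef_pV2 ?posrE ?powR_gt0 ?(lt_le_trans ar_gt0 le_ar_sum) //.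
by apply: ge0_ler_powR le_ar_sum; rewrite ?nnegrE ?subr_ge0 ?addr_ge0 ?powR_ge0 ?ltW.
Qed.

Lemma sub_powR_sum_le (R : realType) (a b p : R) : 0 <= a -> 0 <= b -> 1 < p ->
  a + b - powR (powR a (p / (p - 1)) + powR b (p / (p - 1))) ((p - 1) / p) <= a.
Proof.
move=> a_ge0 b_ge0 p_gt1; have p_gt0 : 0 < p := lt_trans ltr01 p_gt1.
rewrite lerBlDr lerD2l.
have conjK : p / (p - 1) * ((p - 1) / p) = 1.
  by rewrite mulrA divfK ?mulfV ?gt_eqF // subr_gt0.
have {1}-> : b = powR (powR b (p / (p - 1))) ((p - 1) / p).
  by rewrite -powRrM conjK powRr1.
apply: ge0_ler_powR; rewrite ?nnegrE ?powR_ge0 ?addr_ge0 ?lerDr ?powR_ge0 //.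
by rewrite divr_ge0 ?subr_ge0 ?ltW.
Qed.

Lemma le_ZZform (R : realType) (g1 g2 : R -> \bar R) :
  (forall h, (0 <= g2 h)%E) -> (forall h, (g1 h <= g2 h)%E) ->
  (ZZform g1 <= ZZform g2)%E.
Proof.
move=> g2_ge0 le_g12; apply: lee_wpmul2l; first by rewrite lee_fin invr_ge0.
have valley_ge0 h : (0 <= valley g2 h)%E.
  apply: (le_trans (g2_ge0 h)); apply: ereal_sup_ubound.
  by exists 0; rewrite /= ?addr0.
apply: le_integral_nnegr => h /= h_ge0.
  by rewrite mule_ge0 ?lee_fin.
apply: lee_wpmul2r; first by rewrite lee_fin.
apply: ge_ereal_sup => _ [xi xi_ge0 <-].
by apply: (le_trans (le_g12 _)); apply: ereal_sup_ubound; exists xi.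
Qed.

Section BayesRisk.
Variables (R : realType) (d : measure_display) (T : measurableType d).
Variables (mu : {measure set T -> \bar R}) (fphi : R -> R) (fx : T -> R -> R).
Hypothesis fphi_gt0 : forall v, 0 < fphi v.
Hypothesis fx_ge0 : forall x v, 0 <= fx x v.
Hypothesis mfx : measurable_fun setT (fun z : T * R => fx z.1 z.2).
Hypothesis post_gt0 : forall x v, 0 < post fphi fx x v.

Let fphi_ge0 v : 0 <= fphi v := ltW (fphi_gt0 v).

Lemma measurable_fx v : measurable_fun setT (fx ^~ v).
Proof. exact: (measurableT_comp mfx (pair2_measurable v)). Qed.

Lemma marg_gt0 x : 0 < marg fphi fx x.
Proof.
rewrite lt_neqAle fine_ge0 ?andbT; last first.
  by apply: integral_ge0 => w _; rewrite lee_fin mulr_ge0.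
by apply/eqP => m0; have := post_gt0 x 0; rewrite /post -m0 invr0 mulr0 ltxx.
Qed.

Lemma marg_postE x v : marg fphi fx x * post fphi fx x v = fphi v * fx x v.
Proof. by rewrite /post mulrC divfK // gt_eqF // marg_gt0. Qed.

Lemma Emarg_le_region_risk v h (q : T -> R) (A : set T) : measurable A ->
  (forall x, q x <= post fphi fx x v) ->
  (forall x, q x <= post fphi fx x (v + h)) ->
  (Emarg mu fphi fx q <= \int[mu]_(x in A) (fphi v * fx x v)%:E
                         + \int[mu]_(x in ~` A) (fphi (v + h) * fx x (v + h))%:E)%E.
Proof.
move=> mA le_qv le_qvh.
pose risk x := fphi v * fx x v * \1_A x + fphi (v + h) * fx x (v + h) * \1_(~` A) x.
have risk_ge0 x : (0 <= (risk x)%:E)%E.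
  by rewrite lee_fin addr_ge0 // !mulr_ge0 // indicE ler0n.
have mrisk : measurable_fun setT (EFin \o risk).
  apply/measurable_EFinP; apply: measurable_funD; apply: measurable_funM.
  - exact/measurable_funM/measurable_fx.
  - exact: measurable_indic.
  - exact/measurable_funM/measurable_fx.
  - exact/measurable_indic/measurableC.
rewrite (eq_integral (EFin \o risk)); last first.
  by move=> x /[1!inE] xA; rewrite /risk /= !indicE mem_set // memNset ?mulr1 ?mulr0 ?addr0.
rewrite [X in (_ <= _ + X)%E](eq_integral (EFin \o risk)); last first.
  move=> x /[1!inE] xA.
  by rewrite /risk /= !indicE (memNset xA) (mem_set (xA : (~` A) x)) mulr1 mulr0 add0r.
rewrite -ge0_integral_setU ?setUCr ?disj_set2E ?setICr //; last 2 first.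
- exact: measurableC.
- by move=> x _; exact: risk_ge0.
apply: le_integral_nnegr => x _; first exact: risk_ge0.
rewrite /risk /= !indicE in_setC.
by case: (x \in A); rewrite /= ?(mulr1, mulr0, addr0, add0r) lee_fin -marg_postE
  ler_pM2l ?marg_gt0.
Qed.

Lemma Emarg_le_Pmin v h (q : T -> R) :
  (forall x, q x <= post fphi fx x v) ->
  (forall x, q x <= post fphi fx x (v + h)) ->
  (Emarg mu fphi fx q <= (fphi v + fphi (v + h))%:E * Pmin mu fphi fx v h)%E.
Proof.
move=> le_qv le_qvh; rewrite /Pmin /=.
set a := fphi v; set b := fphi (v + h).
have ab_gt0 : 0 < a + b := addr_gt0 (fphi_gt0 _) (fphi_gt0 _).
have scale_pi0 : (a + b) * (a / (a + b)) = a by rewrite mulrC divfK // gt_eqF.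
have scale_pi1 : (a + b) * (1 - a / (a + b)) = b.
  by rewrite mulrBr mulr1 scale_pi0 addrC addKr.
rewrite -lee_pdivrMl //.
apply/ereal_infP => _ [A mA <-].
have pi0_ge0 : 0 <= a / (a + b) := divr_ge0 (fphi_ge0 _) (ltW ab_gt0).
have pi1_ge0 : 0 <= 1 - a / (a + b) by rewrite -(pmulr_rge0 _ ab_gt0) scale_pi1; exact: fphi_ge0.
have mfxA w : measurable_fun A (fun x => (fx x w)%:E).
  exact/measurable_EFinP/measurable_funS/measurable_fx.
have mfxAC w : measurable_fun (~` A) (fun x => (fx x w)%:E).
  exact/measurable_EFinP/measurable_funS/measurable_fx.
rewrite lee_pdivrMl // ge0_muleDr ?mule_ge0 ?integral_ge0 ?lee_fin //.
rewrite !muleA -!EFinM scale_pi0 scale_pi1.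
rewrite -!ge0_integralZl_EFin //; first exact: Emarg_le_region_risk.
- exact: measurableC.
all: by [move=> x _; rewrite lee_fin fx_ge0 | exact: fphi_ge0].
Qed.

Lemma Pmin_ge0 v h : (0 <= Pmin mu fphi fx v h)%E.
Proof.
have ab_gt0 : 0 < fphi v + fphi (v + h) := addr_gt0 (fphi_gt0 _) (fphi_gt0 _).
have pi1_ge0 : 0 <= 1 - fphi v / (fphi v + fphi (v + h)).
  by rewrite subr_ge0 ler_pdivrMr // mul1r lerDl.
apply/ereal_infP => _ [A mA <-].
by rewrite adde_ge0 // mule_ge0 ?lee_fin ?divr_ge0 ?(ltW ab_gt0) ?integral_ge0
  // => x _; rewrite lee_fin.
Qed.

Lemma ZZform_Emarg_le_ZZ (q : R -> R -> T -> R) :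
  (forall h v x, q h v x <= post fphi fx x v) ->
  (forall h v x, q h v x <= post fphi fx x (v + h)) ->
  (ZZform (fun h => \int[lebesgue_measure]_v Emarg mu fphi fx (q h v))
     <= ZZ mu fphi fx)%E.
Proof.
move=> le_qv le_qvh; have risk_ge0 h v :
    (0 <= (fphi v + fphi (v + h))%:E * Pmin mu fphi fx v h)%E.
  by rewrite mule_ge0 ?lee_fin ?addr_ge0 ?Pmin_ge0.
apply: le_ZZform => h; first exact: integral_ge0.
by apply: le_integral_nnegr => v _; last exact: Emarg_le_Pmin.
Qed.

End BayesRisk.

Theorem mainTheorem10 (R : realType) (d : measure_display) (T : measurableType d)
  (mu : {measure set T -> \bar R}) (fphi : R -> R) (fx : T -> R -> R) :
  sigma_finite setT mu ->
  measurable_fun setT fphi ->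
  (forall v, 0 <= fphi v) ->
  (\int[@lebesgue_measure R]_v (fphi v)%:E = 1)%E ->
  measurable_fun setT (fun z : T * R => fx z.1 z.2) ->
  (forall x v, 0 <= fx x v) ->
  (forall v, \int[mu]_x (fx x v)%:E = 1)%E ->
  (forall x v, 0 < post fphi fx x v) ->
  forall p : R, 1 < p ->
    (Cp1 mu fphi fx p <= ZZ mu fphi fx)%E /\
    (Cp2 mu fphi fx p <= ZZ mu fphi fx)%E /\
    ((forall est : T -> R, measurable_fun setT est ->
        (ZZ mu fphi fx <= MSE mu fphi fx est)%E) ->
     forall est : T -> R, measurable_fun setT est ->
        (maxe (Cp1 mu fphi fx p) (Cp2 mu fphi fx p) <= MSE mu fphi fx est)%E).
Proof.
move=> _ _ fphi_ge0 _ mfx fx_ge0 fx_int1 post_gt0 p p_gt1.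
have [x0 _] : exists x : T, True.
  apply: contrapT => T_empty; move: (fx_int1 0).
  have -> : [set: T] = set0.
    by apply/seteqP; split => // x _; apply: T_empty; exists x.
  by rewrite integral_set0 => /eqP; rewrite eqe eq_sym oner_eq0.
have fphi_gt0 v : 0 < fphi v.
  rewrite lt_neqAle fphi_ge0 andbT eq_sym; apply/eqP => fphi_v0.
  by have := post_gt0 x0 v; rewrite /post fphi_v0 !mul0r ltxx.
have post_ge0 x v : 0 <= post fphi fx x v := ltW (post_gt0 x v).
have Cp1_le : (Cp1 mu fphi fx p <= ZZ mu fphi fx)%E.
  apply: (ZZform_Emarg_le_ZZ mu fphi_gt0 fx_ge0 mfx post_gt0
    (q := fun h v x => powR (powR (post fphi fx x v) (1 / (1 - p))
                  + powR (post fphi fx x (v + h)) (1 / (1 - p))) (1 - p))) => h v x.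
    exact: powR_sum_invexp_le (post_gt0 x v) (post_ge0 x _) p_gt1.
  rewrite addrC; exact: powR_sum_invexp_le (post_gt0 x _) (post_ge0 x v) p_gt1.
have Cp2_le : (Cp2 mu fphi fx p <= ZZ mu fphi fx)%E.
  apply: (ZZform_Emarg_le_ZZ mu fphi_gt0 fx_ge0 mfx post_gt0
    (q := fun h v x => post fphi fx x v + post fphi fx x (v + h)
      - powR (powR (post fphi fx x v) (p / (p - 1))
              + powR (post fphi fx x (v + h)) (p / (p - 1))) ((p - 1) / p))) => h v x.
    exact: sub_powR_sum_le (post_ge0 x v) (post_ge0 x _) p_gt1.
  rewrite [X in X - _]addrC [X in powR X _]addrC.
  exact: sub_powR_sum_le (post_ge0 x _) (post_ge0 x v) p_gt1.
split; first exact: Cp1_le.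
split; first exact: Cp2_le.
move=> ZZ_le_MSE est mest; rewrite ge_max; apply/andP.
by split; apply: le_trans (ZZ_le_MSE _ mest).
Qed.
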